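(* Let $A\ge 3$, $N\ge 2$, and let $w:\mathbf{Prof}\to\mathbf{Pref}$ be a social welfare function satisfying IIA with pairwise comparison functions $s_1,\dots,s_A:\{0,e,1\}^N\to\{0,e,1\}$, and satisfying Unanimity and Unrestricted Domain. Then: (1) for every $j\in\{1,\dots,A\}$ and every $x\in\{0,1\}^N$, $s_j(\neg x)=\neg s_j(x)$; (2) for every $x\in\{0,1\}^N$, $s_1(x)=s_2(x)=\dots=s_A(x)$.
   Context: Let $\mathcal{A}=\{a_1,\dots,a_A\}$ and $N\ge 2$ individuals; $e$ is a third symbol distinct from $0,1$. Let $\sigma(i)=i+1$ for $i<A$, $\sigma(A)=1$. A preference relation is $t\in\{0,e,1\}^A$, where $t_i$ records $a_i$ versus $a_{\sigma(i)}$: $0$ means $a_i\prec a_{\sigma(i)}$, $1$ means $a_{\sigma(i)}\prec a_i$, $e$ means $a_i\sim a_{\sigma(i)}$. It corresponds to a weak order if some complete transitive relation on $\mathcal{A}$ realizes all these comparisons; otherwise it is a preference cycle. $\mathbf{Pref}=\{0,e,1\}^A$. A profile is an $A\times N$ matrix over $\{0,e,1\}$ whose every column corresponds to a weak order; $\mathbf{Prof}$ is the set of profiles, written in row form $(r_1,\dots,r_A)$ with $r_j\in\{0,e,1\}^N$. A social welfare function is a map $w:\mathbf{Prof}\to\mathbf{Pref}$. It satisfies IIA if there are functions $s_1,\dots,s_A:\{0,e,1\}^N\to\{0,e,1\}$ (pairwise comparison functions) with $w(r_1,\dots,r_A)=(s_1(r_1),\dots,s_A(r_A))$ for every profile. Unanimity: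 $s_j(\Delta x)=x$ for all $j$ and $x\in\{0,1\}$, where $\Delta x=(x,\dots,x)$. Unrestricted Domain: $w(m)$ corresponds to a weak order for every profile $m$. Negation $\neg$ maps $0\mapsto1$, $1\mapsto0$, $e\mapsto e$, acting entrywise on tuples. *)

From mathcomp Require Import all_boot.
Set Implicit Arguments. Unset Strict Implicit. Unset Printing Implicit Defensive.

Inductive sym := S0 | Se | S1.

Definition neg (a : sym) : sym :=
  match a with S0 => S1 | S1 => S0 | Se => Se end.

Definition negv (N : nat) (x : {ffun 'I_N -> sym}) : {ffun 'I_N -> sym} :=
  [ffun k => neg (x k)].

(* Alternatives are indexed by 'I_A (a_1..a_A ~ 0..A-1); sigma is the cyclic
   successor ordS : i |-> (i+1) mod A.  A preference relation t : 'I_A -> sym,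
   t i records a_i versus a_(sigma i).  R x y is read "x is weakly preferred to
   by y", i.e. x ≼ y. *)
Definition realizes (A : nat) (R : 'I_A -> 'I_A -> Prop) (t : 'I_A -> sym) : Prop :=
  forall i : 'I_A,
    match t i with
    | S0 => R i (ordS i) /\ ~ R (ordS i) i
    | S1 => R (ordS i) i /\ ~ R i (ordS i)
    | Se => R i (ordS i) /\ R (ordS i) i
    end.

Definition is_weak_order (A : nat) (t : 'I_A -> sym) : Prop :=
  exists R : 'I_A -> 'I_A -> Prop,
    (forall x y, R x y \/ R y x) /\
    (forall x y z, R x y -> R y z -> R x z) /\
    realizes R t.

Definition pref (A : nat) := {ffun 'I_A -> sym}.

Definition matrixAN (A N : nat) := {ffun 'I_A -> {ffun 'I_N -> sym}}.

Definition is_profile (A N : nat) (m : matrixAN A N) : Prop :=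
  forall k : 'I_N, is_weak_order (fun i : 'I_A => m i k).

Definition IIA (A N : nat) (w : matrixAN A N -> pref A)
  (s : 'I_A -> {ffun 'I_N -> sym} -> sym) : Prop :=
  forall m, is_profile m -> forall j : 'I_A, w m j = s j (m j).

Definition unanimity (A N : nat) (s : 'I_A -> {ffun 'I_N -> sym} -> sym) : Prop :=
  forall (j : 'I_A) (x : sym), (x = S0 \/ x = S1) -> s j [ffun _ => x] = x.

Definition unrestricted_domain (A N : nat) (w : matrixAN A N -> pref A) : Prop :=
  forall m, is_profile m -> is_weak_order (w m).

Definition binary (N : nat) (x : {ffun 'I_N -> sym}) : Prop :=
  forall k, x k <> Se.

From mathcomp Require Import all_boot zify.

(* Fix a candidate c in {0,1}.  Put x in row j, its negation in row j' and c in
   every other row: each column then has exactly one entry neg c and all others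
   c, which is a weak order.  By IIA and Unanimity the social preference is c
   on every row except possibly j and j', and since going once around the cycle
   a weak order cannot be strict in one direction only, s_j(x) or s_j'(neg x)
   equals neg c.  Taking c = 0 and c = 1 gives s_j'(neg x) = neg s_j(x) for
   j <> j'; with a third alternative k (A >= 3) this yields
   neg s_j(x) = s_k(neg x) = neg s_j'(x). *)

Set Implicit Arguments.
Unset Strict Implicit.
Unset Printing Implicit Defensive.

Lemma sym_eq_dec (a b : sym) : {a = b} + {a <> b}.
Proof. decide equality. Qed.

Section WeakOrders.
Variable A : nat.
Implicit Types (t : 'I_A -> sym) (c : sym).

Lemma weak_order_neg t : is_weak_order t -> is_weak_order (fun i => neg (t i)).
Proof.
case=> R [tot [trans real]]; exists (fun x y => R y x); split; [|split].
- by move=> x y; case: (tot x y); [right | left].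
- by move=> x y z Ryx Rzy; exact: trans Rzy Ryx.
- by move=> i; move: (real i); case: (t i) => /=; tauto.
Qed.

Lemma weak_order_ext t t' :
  (forall i, t i = t' i) -> is_weak_order t -> is_weak_order t'.
Proof.
move=> tt' [R [tot [trans real]]]; exists R; do 2!split => //.
by move=> i; rewrite -tt'; exact: real.
Qed.

Lemma weak_order_negK t : is_weak_order (fun i => neg (t i)) -> is_weak_order t.
Proof.
by move/weak_order_neg; apply: weak_order_ext => i; case: (t i).
Qed.

Lemma weak_order_of_rank t (h : 'I_A -> nat) :
  (forall i, match t i with
             | S0 => h i < h (ordS i)
             | S1 => h (ordS i) < h i
             | Se => h i == h (ordS i)
             end) -> is_weak_order t.
Proof.
move=> ht; exists (fun x y => h x <= h y); split; [|split].
- by move=> x y; case/orP: (leq_total (h x) (h y)); [left | right].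
- by move=> x y z; exact: leq_trans.
- by move=> i; move: (ht i); case: (t i) => /=; lia.
Qed.

(* Going once around the cycle, weak preferences R i (ordS i) everywhere force
   R (ordS i) i, so no comparison can be strict in the direction of ordS. *)
Lemma weak_order_no_increasing_cycle t :
  is_weak_order t -> (forall i, t i <> S1) -> forall i, t i <> S0.
Proof.
case=> R [tot [trans real]] not1 i0 ti0.
have R_ordS i : R i (ordS i) by move: (real i) (not1 i); case: (t i); tauto.
have R_iter k x : R x (iter k (@ordS A) x).
  elim: k => [|k IHk] /=; first by case: (tot x x).
  exact: trans IHk (R_ordS _).
have back : fconnect (@ordS A) (ordS i0) i0.
  by rewrite fconnect_sym ?fconnect1 //; exact: ordS_inj.
have := R_iter (findex (@ordS A) (ordS i0) i0) (ordS i0).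
by rewrite (iter_findex back); move: (real i0); rewrite ti0; tauto.
Qed.

Lemma weak_order_avoid_neg t c :
  c <> Se -> is_weak_order t -> (forall k, t k <> neg c) -> forall i, t i <> c.
Proof.
case: c => // _ wt no_negc.
- exact: weak_order_no_increasing_cycle.
- have neg_not1 k : neg (t k) <> S1 by move: (no_negc k); case: (t k).
  move=> i ti.
  apply: (weak_order_no_increasing_cycle (weak_order_neg wt) neg_not1 (i := i)).
  by rewrite /= ti.
Qed.

(* Rank each alternative by its distance from [ordS p] along the cycle. *)
Lemma weak_order_single_S1 t p :
  1 < A -> t p = S1 -> (forall i, i != p -> t i = S0) -> is_weak_order t.
Proof.
move=> A_gt1 tp t0; have p_lt := ltn_ord p.
pose rank (i : 'I_A) := (i + (A - p.+1)) %% A.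
have rank_lt i : rank i < A by rewrite ltn_mod; lia.
have rank_ordS i : rank (ordS i) = (rank i).+1 %% A.
  by rewrite /rank /= modnDml -[in RHS]addn1 modnDml addn1 addSn.
have rank_p : rank p = A.-1.
  by rewrite /rank (_ : p + _ = A.-1) ?modn_small; lia.
have rank_inj i : rank i = rank p -> i = p.
  move/eqP; rewrite /rank eqn_modDr !modn_small // => /eqP; exact: val_inj.
clearbody rank; apply: (weak_order_of_rank (h := rank)) => i.
case: (eqVneq i p) => [->|ne].
  by rewrite tp rank_ordS rank_p prednK ?modnn; lia.
have rank_ne : rank i != A.-1.
  by apply: contra_neq ne; rewrite -rank_p; exact: rank_inj.
have rank_i_lt := rank_lt i; rewrite t0 // rank_ordS modn_small; lia.
Qed.

Lemma weak_order_single_deviation t p c :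
  1 < A -> c <> Se -> t p = neg c -> (forall i, i != p -> t i = c) ->
  is_weak_order t.
Proof.
move=> A_gt1; case: c => // _ tp tc; first exact: weak_order_single_S1 tp tc.
apply: weak_order_negK; apply: (weak_order_single_S1 (p := p)) => //.
  by rewrite tp.
by move=> i /tc ->.
Qed.

Lemma weak_order_pair_opposite (j j' : 'I_A) a c :
  1 < A -> j != j' -> a <> Se -> c <> Se ->
  is_weak_order (fun i => if i == j then a else if i == j' then neg a else c).
Proof.
move=> A_gt1 jj' a_bin c_bin.
have [->|->] : a = c \/ a = neg c by case: a a_bin; case: c c_bin; auto.
- apply: (weak_order_single_deviation (p := j') (c := c)) => //.
    by rewrite /= eq_sym (negbTE jj') eqxx.
  by move=> i /negbTE /= ->; case: ifP.
- apply: (weak_order_single_deviation (p := j) (c := c)) => //.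
    by rewrite /= eqxx.
  by move=> i /negbTE /= ->; case: ifP => //; case: (c) c_bin.
Qed.

End WeakOrders.

Lemma exists_ord_neq2 A (j j' : 'I_A) :
  2 < A -> exists k : 'I_A, (k != j) && (k != j').
Proof.
move=> A_gt2; have /card_gt0P[k] : 0 < #|[predC pred2 j j']|.
  rewrite -(leq_add2l #|pred2 j j'|) cardC card_ord card2.
  by case: (j != j') => /=; lia.
by move=> kP; exists k; rewrite -negb_or.
Qed.

Section PairwiseComparisons.
Variables (A N : nat) (w : matrixAN A N -> pref A)
  (s : 'I_A -> {ffun 'I_N -> sym} -> sym).
Hypotheses (A_ge3 : 3 <= A) (hIIA : IIA w s) (hU : unanimity s)
  (hUD : unrestricted_domain w).

Lemma comparison_opposite (j j' : 'I_A) x c :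
  j != j' -> binary x -> c <> Se -> s j x = neg c \/ s j' (negv x) = neg c.
Proof.
move=> jj' x_bin c_bin.
pose m : matrixAN A N := [ffun i => if i == j then x
                                    else if i == j' then negv x else [ffun=> c]].
have m_prof : is_profile m.
  move=> k; have := weak_order_pair_opposite (ltnW A_ge3) jj' (x_bin k) c_bin.
  apply: weak_order_ext => i.
  by rewrite !ffunE; case: ifP => //; case: ifP; rewrite ?ffunE.
have s_const i : s i [ffun=> c] = c by apply: hU; case: (c) c_bin; auto.
have [k /andP[kj kj']] := exists_ord_neq2 j j' A_ge3.
have wm i :
  w m i = if i == j then s j x else if i == j' then s j' (negv x) else c.
  rewrite hIIA // ffunE; case: eqVneq => [-> //|_]; case: eqVneq => [-> //|_].
  exact: s_const.
case: (sym_eq_dec (s j x) (neg c)) => [|sjx]; first by left.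
case: (sym_eq_dec (s j' (negv x)) (neg c)) => [|sj'x]; first by right.
exfalso; apply: (weak_order_avoid_neg c_bin (hUD m_prof) _ (i := k)).
  move=> i; rewrite wm.
  by case: ifP => _; last case: ifP => _; last case: (c) c_bin.
by rewrite wm (negbTE kj) (negbTE kj').
Qed.

Lemma comparison_neg (j j' : 'I_A) x :
  j != j' -> binary x -> s j' (negv x) = neg (s j x).
Proof.
move=> jj' x_bin.
have := comparison_opposite jj' x_bin (c := S0).
have := comparison_opposite jj' x_bin (c := S1).
by case: (s j x); case: (s j' (negv x)) => /=; intuition discriminate.
Qed.

Lemma comparison_eq (j j' : 'I_A) x : binary x -> s j x = s j' x.
Proof.
move=> x_bin; have [k /andP[kj kj']] := exists_ord_neq2 j j' A_ge3.
rewrite !(eq_sym k) in kj kj'.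
have := comparison_neg kj x_bin; rewrite (comparison_neg kj' x_bin).
by case: (s j x); case: (s j' x).
Qed.

Lemma comparison_negv (j : 'I_A) x : binary x -> s j (negv x) = neg (s j x).
Proof.
move=> x_bin; have [k /andP[kj _]] := exists_ord_neq2 j j A_ge3.
by rewrite (comparison_neg kj x_bin) (comparison_eq k j x_bin).
Qed.

End PairwiseComparisons.

Theorem mainTheorem6 (A N : nat) (hA : 3 <= A) (hN : 2 <= N)
  (w : matrixAN A N -> pref A) (s : 'I_A -> {ffun 'I_N -> sym} -> sym)
  (hIIA : IIA w s) (hU : unanimity s) (hUD : unrestricted_domain w) :
  (forall (j : 'I_A) (x : {ffun 'I_N -> sym}),
      binary x -> s j (negv x) = neg (s j x)) /\
  (forall x : {ffun 'I_N -> sym}, binary x ->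
      forall j j' : 'I_A, s j x = s j' x).
Proof.
split=> [j x x_bin | x x_bin j j'].
- exact: (comparison_negv hA hIIA hU hUD).
- exact: (comparison_eq hA hIIA hU hUD).
Qed.
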